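(* Let $R$ be a Boolean ring (with identity). The following are equivalent: (1) $R$ is an Ikeda–Nakayama ring, i.e. $\mathrm{Ann}(I_1\cap I_2)=\mathrm{Ann}(I_1)+\mathrm{Ann}(I_2)$ for all ideals $I_1,I_2$ of $R$; (2) for any two ideals $A,B$ of $R$ with $A\cap B=(0)$, $\mathrm{Ann}(A)+\mathrm{Ann}(B)=R$; (3) $R$ is self-injective.
   Context: A Boolean ring is a ring in which every element is idempotent (hence it is commutative). $\mathrm{Ann}(X)=\{r\in R: rX=0\}$. *)

From HB Require Import structures.
From mathcomp Require Import all_boot all_order all_algebra.
Set Implicit Arguments. Unset Strict Implicit. Unset Printing Implicit Defensive.
Import GRing.Theory.
Local Open Scope ring_scope.

Definition boolean_ring (R : pzRingType) : Prop := forall x : R, x * x = x.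

Definition is_ideal (R : pzRingType) (I : R -> Prop) : Prop :=
  [/\ I 0,
      (forall x y, I x -> I y -> I (x + y)),
      (forall x, I x -> I (- x)),
      (forall r x, I x -> I (r * x)) &
      (forall r x, I x -> I (x * r))].

Definition ann (R : pzRingType) (X : R -> Prop) : R -> Prop :=
  fun r => forall x, X x -> r * x = 0.

Definition ideal_cap (R : pzRingType) (I J : R -> Prop) : R -> Prop :=
  fun x => I x /\ J x.

Definition ideal_sum (R : pzRingType) (I J : R -> Prop) : R -> Prop :=
  fun x => exists a b, [/\ I a, J b & x = a + b].

Definition set_eq (R : Type) (A B : R -> Prop) : Prop := forall x, A x <-> B x.

Definition ikeda_nakayama (R : pzRingType) : Prop :=
  forall I1 I2 : R -> Prop, is_ideal I1 -> is_ideal I2 ->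
    set_eq (ann (ideal_cap I1 I2)) (ideal_sum (ann I1) (ann I2)).

Definition ann_sum_whole (R : pzRingType) : Prop :=
  forall A B : R -> Prop, is_ideal A -> is_ideal B ->
    set_eq (ideal_cap A B) (fun x => x = 0) ->
    set_eq (ideal_sum (ann A) (ann B)) (fun _ => True).

(* Injective (left) R-module: every R-linear map into E from a submodule
   (given by an injective linear map f : M -> N) extends along f. *)
Definition injective_module (R : pzRingType) (E : lmodType R) : Prop :=
  forall (M N : lmodType R) (f : {linear M -> N}) (g : {linear M -> E}),
    injective f -> exists h : {linear N -> E}, forall m, h (f m) = g m.

Definition self_injective (R : pzRingType) : Prop := injective_module R^o.

(* (1) => (2) holds in any ring, since Ann (A `&` B) = Ann 0 contains 1.
   (2) => (1): for r in Ann (I1 `&` I2) the ideals r I1 and r I2 meet in 0,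
   and a decomposition 1 = u + v from (2) splits r = r u + r v.
   (3) => (2) holds in any commutative ring: extend the projection
   a + b |-> a of A (+) B to a map r |-> r c on R; then 1 = (1 - c) + c.
   (2) => (3) goes through Baer's criterion.  We prove, for an arbitrary
   ring, that Baer's criterion implies self-injectivity (Zorn's lemma applied
   to graphs of partial linear extensions), and that in a Boolean ring (2)
   gives Baer's criterion: a linear psi on an ideal I satisfies
   psi t = t psi t, so psi I and (id - psi) I meet in 0 and (2) makes psi a
   multiplication. *)

From HB Require Import structures.
From mathcomp Require Import all_boot all_order all_algebra.
From mathcomp Require Import boolp classical_sets.
Set Implicit Arguments. Unset Strict Implicit. Unset Printing Implicit Defensive.
Import GRing.Theory.
Local Open Scope classical_set_scope.
Local Open Scope ring_scope.

Section Annihilators.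
Variable R : pzRingType.

Lemma ann_mull (X : R -> Prop) r a : ann X a -> ann X (r * a).
Proof. by move=> Xa x Xx; rewrite -mulrA Xa ?mulr0. Qed.

Lemma ann_sum_full (X Y : R -> Prop) :
  ideal_sum (ann X) (ann Y) 1 -> set_eq (ideal_sum (ann X) (ann Y)) (fun _ => True).
Proof.
move=> [u [v [Xu Yv uv1]]] x; split=> // _.
exists (x * u), (x * v); split; [exact: ann_mull | exact: ann_mull |].
by rewrite -mulrDr -uv1 mulr1.
Qed.

(* (1) => (2) in any ring: if A `&` B = 0 then Ann (A `&` B) = R contains 1. *)
Lemma ikeda_nakayama_ann_sum : ikeda_nakayama R -> ann_sum_whole R.
Proof.
move=> IN A B iA iB AB0; apply: ann_sum_full.
by apply: (IN A B iA iB 1).1 => x /AB0 ->; rewrite mulr0.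
Qed.

End Annihilators.

Definition left_ideal (R : pzRingType) (I : R -> Prop) : Prop :=
  [/\ I 0, (forall x y, I x -> I y -> I (x + y)) & (forall a x, I x -> I (a * x))].

Definition linear_on (R : pzRingType) (I : R -> Prop) (psi : R -> R) : Prop :=
  (forall x y, I x -> I y -> psi (x + y) = psi x + psi y) /\
  (forall a x, I x -> psi (a * x) = a * psi x).

Definition baer_criterion (R : pzRingType) : Prop :=
  forall (I : R -> Prop) (psi : R -> R), left_ideal I -> linear_on I psi ->
    exists v, forall r, I r -> psi r = r * v.

Lemma ideal_left_ideal (R : pzRingType) (I : R -> Prop) : is_ideal I -> left_ideal I.
Proof. by case=> I0 ID _ IM _; split. Qed.

Section BaerExtension.
Variables (R : pzRingType) (baer : baer_criterion R).
Variables (M N : lmodType R) (f : {linear M -> N}) (g : {linear M -> R^o}).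
Hypothesis f_inj : injective f.

(* Graphs of R-linear maps from a submodule of N to R extending g along f:
   closed under sums and scaling, containing (f m, g m), and functional. *)
Definition extension_graph (G : N -> R -> Prop) : Prop :=
  [/\ forall x1 y1 x2 y2, G x1 y1 -> G x2 y2 -> G (x1 + x2) (y1 + y2),
      forall a x y, G x y -> G (a *: x) (a * y),
      forall m, G (f m) (g m) &
      forall y, G 0 y -> y = 0].

Definition subgraph (G1 G2 : N -> R -> Prop) : Prop := forall x y, G1 x y -> G2 x y.

(* The graph of g itself: functional because f is injective. *)
Definition graph_g (x : N) (y : R) : Prop := exists m, x = f m /\ y = g m.

Lemma graph_g_extension : extension_graph graph_g.
Proof.
split.
- by move=> _ _ _ _ [m1 [-> ->]] [m2 [-> ->]]; exists (m1 + m2); rewrite !linearD.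
- by move=> a _ _ [m [-> ->]]; exists (a *: m); rewrite !linearZ.
- by move=> m; exists m.
- move=> _ [m [/esym fm0 ->]].
  have /f_inj -> : f m = f 0 by rewrite fm0 linear0.
  by rewrite linear0.
Qed.

Section ExtensionGraph.
Variables (G : N -> R -> Prop) (Gext : extension_graph G).

Lemma extension_graph_sub_g : subgraph graph_g G.
Proof. by have [_ _ Gf _] := Gext; move=> _ _ [m [-> ->]]. Qed.

Lemma extension_graph0 : G 0 0.
Proof. by apply: extension_graph_sub_g; exists 0; rewrite !linear0. Qed.

(* An additive graph with G 0 y -> y = 0 is the graph of a function. *)
Lemma extension_graph_functional x y1 y2 : G x y1 -> G x y2 -> y1 = y2.
Proof.
have [GD GZ _ G0] := Gext => G1 G2; apply/eqP; rewrite -subr_eq0; apply/eqP/G0.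
by have := GD _ _ _ _ G1 (GZ (-1) _ _ G2); rewrite scaleN1r mulN1r subrr.
Qed.

Lemma total_graph_extension :
  (forall x, exists y, G x y) -> exists h : {linear N -> R^o}, forall m, h (f m) = g m.
Proof.
move=> Gtot; have [GD GZ Gf _] := Gext.
pose h x := projT1 (cid (Gtot x)).
have hP x : G x (h x) by exact: projT2 (cid (Gtot x)).
have h_lin : linear (h : N -> R^o).
  move=> a x y; apply: extension_graph_functional (hP _) _.
  exact: GD (GZ _ _ _ (hP x)) (hP y).
pose hL : {linear N -> R^o} :=
  HB.pack (h : N -> R^o) (GRing.isLinear.Build _ _ _ _ (h : N -> R^o) h_lin).
by exists hL => m; apply: extension_graph_functional (hP _) (Gf m).
Qed.

Definition slice (n : N) (r : R) : Prop := exists y, G (r *: n) y.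

Lemma slice_left_ideal n : left_ideal (slice n).
Proof.
have [GD GZ _ _] := Gext; split.
- by exists 0; rewrite scale0r; exact: extension_graph0.
- by move=> x y [y1 G1] [y2 G2]; exists (y1 + y2); rewrite scalerDl; apply: GD.
- by move=> a x [y Gxy]; exists (a * y); rewrite -scalerA; apply: GZ.
Qed.

Lemma slice_linear n :
  exists psi, (forall r, slice n r -> G (r *: n) (psi r)) /\ linear_on (slice n) psi.
Proof.
have [GD GZ _ _] := Gext; have [_ ID IM] := slice_left_ideal n.
pose psi r := if pselect (slice n r) is left Ir then projT1 (cid Ir) else 0.
have psiP r : slice n r -> G (r *: n) (psi r).
  by rewrite /psi; case: pselect => // Ir _; exact: projT2 (cid Ir).
exists psi; split=> //.
split=> [x y Ix Iy | a x Ix]; apply: extension_graph_functional (psiP _ _) _.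
- exact: ID.
- by rewrite scalerDl; apply: GD; apply: psiP.
- exact: IM.
- by rewrite -scalerA; apply: GZ; apply: psiP.
Qed.

(* Key step: a graph missing some n extends strictly.  By Baer's criterion
   the linear map of slice_linear is r |-> r v; then p + r n |-> G p + r v
   is an extension graph containing (n, v). *)
Lemma extension_graph_grow n : ~ (exists y, G n y) ->
  exists2 G', extension_graph G' & subgraph G G' /\ ~ subgraph G' G.
Proof.
move=> n_out; have [GD GZ Gf _] := Gext.
have [psi [psiP lin]] := slice_linear n.
have [v psi_v] := baer (slice_left_ideal n) lin.
pose G' x y := exists p s r, [/\ G p s, x = p + r *: n & y = s + r * v].
exists G'; last split.
- split.
  + move=> _ _ _ _ [p1 [s1 [r1 [G1 -> ->]]]] [p2 [s2 [r2 [G2 -> ->]]]].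
    exists (p1 + p2), (s1 + s2), (r1 + r2); split; first exact: GD.
      by rewrite scalerDl addrACA.
    by rewrite mulrDl addrACA.
  + move=> a _ _ [p [s [r [Gps -> ->]]]]; exists (a *: p), (a * s), (a * r).
    by split; [exact: GZ | rewrite scalerDr scalerA | rewrite mulrDr mulrA].
  + by move=> m; exists (f m), (g m), 0; rewrite scale0r mul0r !addr0.
  + move=> y [p [s [r [Gps p_rn0 ->]]]].
    have pn : p = (- r) *: n by apply/eqP; rewrite scaleNr -addr_eq0 -p_rn0.
    have Gs : G ((- r) *: n) s by rewrite -pn.
    have Ir : slice n (- r) by exists s.
    rewrite (extension_graph_functional Gs (psiP _ Ir)) psi_v //.
    by rewrite mulNr addNr.
- by move=> x y Gxy; exists x, y, 0; rewrite scale0r mul0r !addr0.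
- move=> sub; apply: n_out; exists v; apply: sub; exists 0, 0, 1.
  by rewrite scale1r mul1r !add0r; split=> //; exact: extension_graph0.
Qed.

End ExtensionGraph.

Lemma chain_union_extension (F : (N -> R -> Prop) -> Prop) :
  (exists G, F G) -> (forall G, F G -> extension_graph G) ->
  (forall G1 G2, F G1 -> F G2 -> subgraph G1 G2 \/ subgraph G2 G1) ->
  extension_graph (fun x y => exists2 G, F G & G x y).
Proof.
move=> [G0 FG0] Fext Fchain; split.
- move=> x1 y1 x2 y2 [G1 FG1 G1xy] [G2 FG2 G2xy].
  have [s12 | s21] := Fchain _ _ FG1 FG2.
  + by exists G2 => //; have [GD _ _ _] := Fext _ FG2; apply: GD => //; apply: s12.
  + by exists G1 => //; have [GD _ _ _] := Fext _ FG1; apply: GD => //; apply: s21.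
- by move=> a x y [G FG Gxy]; exists G => //; have [_ GZ _ _] := Fext _ FG; apply: GZ.
- by move=> m; exists G0 => //; have [_ _ Gf _] := Fext _ FG0.
- by move=> y [G FG G0y]; have [_ _ _ G_fun] := Fext _ FG; apply: G_fun.
Qed.

(* Zorn's lemma yields a maximal extension graph, which must be total. *)
Lemma baer_extension : exists h : {linear N -> R^o}, forall m, h (f m) = g m.
Proof.
pose T := {G : N -> R -> Prop | extension_graph G}.
pose below (G1 G2 : T) : bool := `[< subgraph (sval G1) (sval G2) >].
have [|||[G Gext] Gmax] := @ZL_preorder T (exist _ _ graph_g_extension) below.
- by move=> t; apply/asboolP.
- by move=> t1 t2 t3 /asboolP s12 /asboolP s23; apply/asboolP => x y /s12 /s23.
- move=> A A_chain.
  pose F G := G = graph_g \/ exists2 t, A t & G = sval t.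
  have Fext G : F G -> extension_graph G.
    by case=> [-> | [t _ ->]]; [exact: graph_g_extension | exact: proj2_sig].
  have Fchain G1 G2 : F G1 -> F G2 -> subgraph G1 G2 \/ subgraph G2 G1.
    move=> [->|[t1 At1 ->]] [->|[t2 At2 ->]].
    + by left.
    + by left; exact: extension_graph_sub_g (proj2_sig t2).
    + by right; exact: extension_graph_sub_g (proj2_sig t1).
    + by case: (A_chain _ _ At1 At2) => /asboolP; [left | right].
  have Uext := chain_union_extension (ex_intro _ _ (or_introl erefl)) Fext Fchain.
  exists (exist _ _ Uext) => t At; apply/asboolP => x y Gxy.
  by exists (sval t) => //; right; exists t.
apply: (total_graph_extension Gext) => x; apply: contrapT => x_out.
have [G' G'ext [sub nsub]] := extension_graph_grow Gext x_out.
by apply: nsub; apply/asboolP; apply: (Gmax (exist _ G' G'ext)); apply/asboolP.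
Qed.

End BaerExtension.

Lemma baer_self_injective (R : pzRingType) : baer_criterion R -> self_injective R.
Proof. by move=> baer M N f g f_inj; exact: baer_extension. Qed.

Section Submodule.
Variables (R : pzRingType) (V : lmodType R) (S : {pred V}).
Hypothesis S_closed : subsemimod_closed S.

Record submod := Submod {submod_val : V; _ : submod_val \in S}.
HB.instance Definition _ := [isSub for submod_val].
HB.instance Definition _ := [Choice of submod by <:].
HB.instance Definition _ := GRing.SubChoice_isSubLmodule.Build _ _ _ submod S_closed.

Definition submod_lmod : lmodType R := submod.
Definition submod_incl : {linear submod_lmod -> V} := val.

End Submodule.

Section CommutativeRing.
Variables (R : pzRingType) (mulRC : commutative (@GRing.mul R)).

Lemma image_ideal (I : R -> Prop) (psi : R -> R) :
  left_ideal I -> linear_on I psi -> is_ideal (psi @` I).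
Proof.
move=> [I0 ID IM] [psiD psiM].
have psi0 : psi 0 = 0 by have := psiM 0 0 I0; rewrite !mul0r.
split.
- by exists 0.
- by move=> _ _ [x Ix <-] [y Iy <-]; exists (x + y); [apply: ID | rewrite psiD].
- by move=> _ [x Ix <-]; exists (-1 * x); [apply: IM | rewrite psiM // mulN1r].
- by move=> a _ [x Ix <-]; exists (a * x); [apply: IM | rewrite psiM].
- by move=> a _ [x Ix <-]; exists (a * x); [apply: IM | rewrite psiM // mulRC].
Qed.

Lemma mull_linear_on (I : R -> Prop) (r : R) : linear_on I ( *%R r).
Proof.
by split=> [x y _ _ | a x _] /=; rewrite ?mulrDr // mulrA (mulRC r) mulrA.
Qed.

Lemma ann_image_mull (I : R -> Prop) (r u : R) :
  ann (( *%R r) @` I) u -> ann I (r * u).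
Proof. by move=> Au x Ix; rewrite (mulRC r) -mulrA; apply: Au; exists x. Qed.

(* If A `&` B = 0, then (a, b) |-> a + b embeds A x B into R;
   extending the first projection along it gives r |-> r c with a c = a on A
   and b c = 0 on B, so 1 = (1 - c) + c lies in Ann A + Ann B. *)
Lemma self_injective_ann_sum : self_injective R -> ann_sum_whole R.
Proof.
move=> inj A B [A0 AD AN Al _] [B0 BD BN Bl _] AB0; apply: ann_sum_full.
pose S : {pred R^o * R^o} := [pred p | `[< A p.1 /\ B p.2 >]].
have S_closed : subsemimod_closed S.
  split; [split|] => [|[a1 b1] [a2 b2] |r [a b]]; rewrite !inE /=.
  - by split.
  - by move=> [Aa1 Bb1] [Aa2 Bb2]; split; auto.
  - by move=> [Aa Bb]; split; [apply: Al | apply: Bl].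
pose incl := submod_incl S_closed.
pose sum : {linear _ -> R^o} := (fst \+ snd) \o incl.
have sum_inj : injective sum.
  case=> [[a1 b1] Sp] [[a2 b2] Sq] /= ab12; apply: val_inj => /=.
  move: Sp Sq; rewrite !inE => -[Aa1 Bb1] [Aa2 Bb2].
  have ab : a1 - a2 = b2 - b1.
    by apply/eqP; rewrite subr_eq addrAC (addrC b2) -ab12 addrK.
  have a12 : a1 - a2 = 0 by apply: (AB0 _).1; split; [|rewrite ab]; auto.
  by rewrite (subr0_eq a12) (subr0_eq (etrans (esym ab) a12)).
have [h h_ext] := inj _ _ sum (fst \o incl) sum_inj.
pose c : R := h 1.
have hmul r : h r = r * c.
  have hZ : h (r *: (1 : R^o)) = r *: h 1 := linearZZ h r 1.
  by change (h (r * 1) = r * h 1) in hZ; rewrite mulr1 in hZ.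
have hA a : A a -> a * c = a.
  move=> Aa; have Sa : (a, 0 : R^o) \in S by apply/asboolP.
  by rewrite -hmul; have := h_ext (Submod Sa); rewrite /= addr0.
have hB b : B b -> b * c = 0.
  move=> Bb; have Sb : (0 : R^o, b) \in S by apply/asboolP.
  by rewrite -hmul; have := h_ext (Submod Sb); rewrite /= add0r.
exists (1 - c), c; split; last by rewrite subrK.
- by move=> a Aa; rewrite mulrBl mul1r mulRC hA // subrr.
- by move=> b Bb; rewrite mulRC hB.
Qed.

End CommutativeRing.

Section BooleanRing.
Variables (R : pzRingType) (hR : boolean_ring R).

Lemma boolean_oppr (x : R) : - x = x.
Proof.
have := hR (x + x); rewrite mulrDl !mulrDr !hR => /(canRL (addrK (x + x))).
by rewrite subrr => /eqP; rewrite addr_eq0 => /eqP.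
Qed.

(* ... and is commutative: (x + y)^2 = x + y forces x * y + y * x = 0. *)
Lemma boolean_mulrC : commutative (@GRing.mul R).
Proof.
move=> x y; have xy0 : x * y + y * x = 0.
  apply: (addrI (x + y)); rewrite addr0 -[RHS](hR (x + y)) mulrDl !mulrDr !hR.
  by rewrite addrACA [y + _]addrC.
by move/eqP: xy0; rewrite addr_eq0 boolean_oppr => /eqP.
Qed.

(* (2) => (1): for r in Ann (I1 `&` I2), the ideals r I1 and r I2 meet in 0;
   writing 1 = u + v with u in Ann (r I1), v in Ann (r I2) gives
   r = r u + r v with r u in Ann I1 and r v in Ann I2. *)
Lemma ann_sum_ikeda_nakayama : ann_sum_whole R -> ikeda_nakayama R.
Proof.
move=> AS I1 I2 iI1 iI2 r; split; last first.
  by move=> [a [b [I1a I2b ->]]] x [I1x I2x]; rewrite mulrDl I1a // I2b // addr0.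
move=> r_ann; have [_ _ _ _ I1r] := iI1; have [_ _ _ I2l _] := iI2.
have iA := image_ideal boolean_mulrC (ideal_left_ideal iI1)
  (mull_linear_on boolean_mulrC I1 r).
have iB := image_ideal boolean_mulrC (ideal_left_ideal iI2)
  (mull_linear_on boolean_mulrC I2 r).
have AB0 : set_eq (ideal_cap (( *%R r) @` I1) (( *%R r) @` I2)) (fun x => x = 0).
  move=> x; split=> [[[y I1y ry] [z I2z rz]] | ->]; last by split; [case: iA | case: iB].
  rewrite -(hR x) -{1}ry -rz /= -mulrA (mulrA y) (boolean_mulrC y r) -mulrA mulrA hR.
  by apply: r_ann; split; [apply: I1r | apply: I2l].
have [u [v [Au Bv uv1]]] := (AS _ _ iA iB AB0 1).2 Logic.I.
exists (r * u), (r * v); split; last by rewrite -mulrDr -uv1 mulr1.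
- exact: (ann_image_mull boolean_mulrC Au).
- exact: (ann_image_mull boolean_mulrC Bv).
Qed.

(* (2) => Baer's criterion.  For psi linear on I we have psi t = t psi t, so the
   ideals psi I and (id - psi) I meet in 0; writing 1 = u + v accordingly,
   psi r = v psi r = v r for every r in I. *)
Lemma ann_sum_baer : ann_sum_whole R -> baer_criterion R.
Proof.
move=> AS I psi iI lin; have [psiD psiM] := lin.
have psiK t : I t -> t * psi t = psi t by move=> It; rewrite -psiM // hR.
have psi_sym r s : I r -> I s -> psi r * s = r * psi s.
  by move=> Ir Is; rewrite boolean_mulrC -!psiM // boolean_mulrC.
have lin_co : linear_on I (fun r => r - psi r).
  split=> [x y Ix Iy | a x Ix]; first by rewrite psiD // opprD addrACA.
  by rewrite psiM // mulrBr.
have iA := image_ideal boolean_mulrC iI lin.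
have iB := image_ideal boolean_mulrC iI lin_co.
have AB0 : set_eq (ideal_cap (psi @` I) ((fun r => r - psi r) @` I)) (fun x => x = 0).
  move=> x; split=> [[[r Ir psir] [s Is psis]] | ->]; last first.
    by split; [case: iA | case: iB].
  have psi_rs : psi r * psi s = psi r * s.
    by rewrite -{1}(psiK s) // mulrA psi_sym // -mulrA hR.
  by rewrite -(hR x) -{1}psir -psis mulrBr psi_rs subrr.
have [u [v [Au Bv uv1]]] := (AS _ _ iA iB AB0 1).2 Logic.I.
exists v => r Ir.
have u_psi : u * psi r = 0 by apply: Au; exists r.
have v_psi : v * r = v * psi r.
  by apply: subr0_eq; rewrite -mulrBr; apply: Bv; exists r.
by rewrite -[psi r]mul1r uv1 mulrDl u_psi add0r -v_psi boolean_mulrC.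
Qed.

End BooleanRing.

Theorem proposition2p10 (R : pzRingType) (hR : boolean_ring R) :
  (ikeda_nakayama R <-> ann_sum_whole R) /\ (ann_sum_whole R <-> self_injective R).
Proof.
split; split.
- exact: ikeda_nakayama_ann_sum.
- exact: (ann_sum_ikeda_nakayama hR).
- by move=> AS; apply: baer_self_injective; exact: (ann_sum_baer hR).
- exact: (self_injective_ann_sum (boolean_mulrC hR)).
Qed.
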